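(* Fix $\lambda,\sigma>0$, let $\{\psi_p\}_{p\in\mathbb{R}^2\times S^1}$ be the Gabor family and $d(p,q)=\|\psi_p-\psi_q\|_{L^2}$. For $p_0=(x_0,y_0,\theta_0)$ let $$g(p_0)=2\sigma^2\pi\begin{pmatrix}\big(\frac{1}{4\sigma^2}+\frac{2\pi^2}{\lambda^2}\big)\cos^2\theta_0+\frac{1}{4\sigma^2}\sin^2\theta_0 & \frac{2\pi^2}{\lambda^2}\cos\theta_0\sin\theta_0 & 0\\ \frac{2\pi^2}{\lambda^2}\cos\theta_0\sin\theta_0 & \big(\frac{1}{4\sigma^2}+\frac{2\pi^2}{\lambda^2}\big)\sin^2\theta_0+\frac{1}{4\sigma^2}\cos^2\theta_0 & 0\\ 0&0&\frac{\sigma^2\pi^2}{\lambda^2}\end{pmatrix}.$$ Then, as $p=(x,y,\theta)\to p_0$ (with $\theta-\theta_0$ represented in $(-\pi,\pi]$), writing $\Delta=(x-x_0,y-y_0,\theta-\theta_0)$, $$d^2(p,p_0)=\Delta^{T}g(p_0)\Delta+o(|\Delta|^2).$$ Moreover $\det g(p_0)=8\sigma^6\pi^3\big(\frac{1}{4\sigma^2}+\frac{2\pi^2}{\lambda^2}\big)\frac{1}{4\sigma^2}\frac{\sigma^2\pi^2}{\lambda^2}$ is independent of $p_0$, so the Riemannian measure of $g$ is a constant multiple of Lebesgue measure on $\mathbb{R}^2\times S^1$.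
   Context: Gabor family: for $p=(x,y,\theta)\in\mathbb{R}^2\times S^1$, $\psi_p(u,v)=\psi_0(R_{-\theta}(u-x,v-y))$ with $\psi_0(u,v)=\exp(2\pi iu/\lambda)\exp(-\frac{u^2+v^2}{2\sigma^2})$, where $R_\alpha$ is the rotation of $\mathbb{R}^2$ by angle $\alpha$. *)

From Stdlib Require Import Reals.
Open Scope R_scope.

Definition rotU (x y th u v : R) : R := (u - x) * cos th + (v - y) * sin th.
Definition rotV (x y th u v : R) : R := - (u - x) * sin th + (v - y) * cos th.

(* psi_0(a,b) = exp(2 pi i a / lam) exp(-(a^2+b^2)/(2 sig^2)), real and imaginary parts. *)
Definition psi0_re (lam sig a b : R) : R :=
  cos (2 * PI * a / lam) * exp (- (a ^ 2 + b ^ 2) / (2 * sig ^ 2)).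
Definition psi0_im (lam sig a b : R) : R :=
  sin (2 * PI * a / lam) * exp (- (a ^ 2 + b ^ 2) / (2 * sig ^ 2)).

(* Gabor family psi_p(u,v) = psi_0(R_{-th}(u-x,v-y)), p = (x,y,th). *)
Definition gabor_re (lam sig x y th u v : R) : R :=
  psi0_re lam sig (rotU x y th u v) (rotV x y th u v).
Definition gabor_im (lam sig x y th u v : R) : R :=
  psi0_im lam sig (rotU x y th u v) (rotV x y th u v).

Definition gabor_diff_sq (lam sig x1 y1 th1 x2 y2 th2 u v : R) : R :=
  (gabor_re lam sig x1 y1 th1 u v - gabor_re lam sig x2 y2 th2 u v) ^ 2 +
  (gabor_im lam sig x1 y1 th1 u v - gabor_im lam sig x2 y2 th2 u v) ^ 2.

Definition improper_integral (f : R -> R) (l : R) : Prop :=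
  forall eps : R, 0 < eps -> exists M : R, 0 < M /\
    forall a b : R, a <= - M -> M <= b ->
      exists pr : Riemann_integrable f a b, Rabs (RiemannInt pr - l) < eps.

Definition integral_R2 (f : R -> R -> R) (l : R) : Prop :=
  exists F : R -> R,
    (forall u : R, improper_integral (fun v => f u v) (F u)) /\
    improper_integral F l.

Definition gabor_dist_sq (lam sig x1 y1 th1 x2 y2 th2 l : R) : Prop :=
  integral_R2 (gabor_diff_sq lam sig x1 y1 th1 x2 y2 th2) l.

(* Representative of an angle difference in (-pi, pi]. *)
Definition angle_rep (t : R) : R :=
  t + 2 * PI * IZR (up (- (t + PI) / (2 * PI))).

(* The metric tensor g(p0); indices 0,1,2 correspond to x, y, theta. *)
Definition gmat (lam sig th0 : R) (i j : nat) : R :=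
  let A := 1 / (4 * sig ^ 2) + 2 * PI ^ 2 / lam ^ 2 in
  let B := 1 / (4 * sig ^ 2) in
  let C := 2 * PI ^ 2 / lam ^ 2 in
  2 * sig ^ 2 * PI *
  match i, j with
  | 0%nat, 0%nat => A * (cos th0) ^ 2 + B * (sin th0) ^ 2
  | 0%nat, 1%nat => C * cos th0 * sin th0
  | 1%nat, 0%nat => C * cos th0 * sin th0
  | 1%nat, 1%nat => A * (sin th0) ^ 2 + B * (cos th0) ^ 2
  | 2%nat, 2%nat => sig ^ 2 * PI ^ 2 / lam ^ 2
  | _, _ => 0
  end.

Definition quad3 (M : nat -> nat -> R) (d0 d1 d2 : R) : R :=
  let d := fun k : nat => match k with 0%nat => d0 | 1%nat => d1 | _ => d2 end in
  M 0%nat 0%nat * d 0%nat * d 0%nat + M 0%nat 1%nat * d 0%nat * d 1%nat + M 0%nat 2%nat * d 0%nat * d 2%nat +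
  M 1%nat 0%nat * d 1%nat * d 0%nat + M 1%nat 1%nat * d 1%nat * d 1%nat + M 1%nat 2%nat * d 1%nat * d 2%nat +
  M 2%nat 0%nat * d 2%nat * d 0%nat + M 2%nat 1%nat * d 2%nat * d 1%nat + M 2%nat 2%nat * d 2%nat * d 2%nat.

Definition det3 (M : nat -> nat -> R) : R :=
  M 0%nat 0%nat * (M 1%nat 1%nat * M 2%nat 2%nat - M 1%nat 2%nat * M 2%nat 1%nat)
  - M 0%nat 1%nat * (M 1%nat 0%nat * M 2%nat 2%nat - M 1%nat 2%nat * M 2%nat 0%nat)
  + M 0%nat 2%nat * (M 1%nat 0%nat * M 2%nat 1%nat - M 1%nat 1%nat * M 2%nat 0%nat).

Definition norm3 (d0 d1 d2 : R) : R := sqrt (d0 ^ 2 + d1 ^ 2 + d2 ^ 2).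

From Stdlib Require Import Reals Lra Lia ZArith FunctionalExtensionality.
From Coquelicot Require Import Coquelicot.
Open Scope R_scope.

(* Expanding |psi_p - psi_q|^2 and integrating first in v, then in u, one meets only the integrals
   int exp(-((t - m)/s)^2) cos(b t + c) dt = s sqrt(pi) exp(-(b s)^2/4) cos(b m + c); they follow
   from int exp(-t^2) = sqrt(pi) and from the fact that exp(b^2/4) int exp(-t^2) cos(b t) dt does
   not depend on b.  Hence d^2(p,q) = 2 pi sig^2 (1 - exp(-E) cos P), with E quadratic in the
   differences of the positions and of the unit vectors (cos th, sin th), and P a phase bilinear in
   them.  Near p0, 1 - exp(-E) cos P = E + P^2/2 + O(|Delta|^4), and E + P^2/2 is the quadratic form
   of g(p0) up to O(|Delta|^3), with explicit constants. *)

(** * Improper integrals on the line and on the plane *)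

(* Coquelicot's integration lemmas live in an arbitrary normed module; stated over [R], their
   conclusions are goals that [ring], [field] and [lra] recognise. *)
Lemma ex_RInt_of_continuous (f : R -> R) :
  (forall x, continuous f x) -> forall a b, ex_RInt f a b.
Proof. intros Hf a b; apply (ex_RInt_continuous (V := R_CompleteNormedModule)); auto. Qed.

Lemma RInt_ext_R (f g : R -> R) a b : (forall x, f x = g x) -> RInt f a b = RInt g a b.
Proof. intros H; apply RInt_ext; intros x _; apply H. Qed.

Lemma RInt_plus_R f g a b : ex_RInt f a b -> ex_RInt g a b ->
  RInt (fun x => f x + g x) a b = RInt f a b + RInt g a b.
Proof. intros Hf Hg; exact (RInt_plus f g a b Hf Hg). Qed.

Lemma ex_RInt_scal_R f c a b : ex_RInt f a b -> ex_RInt (fun x => c * f x) a b.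
Proof. intros Hf; exact (ex_RInt_scal f a b c Hf). Qed.

Lemma RInt_scal_R f c a b : ex_RInt f a b -> RInt (fun x => c * f x) a b = c * RInt f a b.
Proof. intros Hf; exact (RInt_scal f a b c Hf). Qed.

Lemma RInt_opp_R f a b : ex_RInt f a b -> RInt (fun x => - f x) a b = - RInt f a b.
Proof. intros Hf; exact (RInt_opp f a b Hf). Qed.

Lemma RInt_swap_R f a b : ex_RInt f a b -> RInt f b a = - RInt f a b.
Proof. intros Hf; symmetry; exact (opp_RInt_swap f a b Hf). Qed.

Lemma RInt_comp_scale f c a b : ex_RInt f (c * a) (c * b) ->
  RInt (fun t => c * f (c * t)) a b = RInt f (c * a) (c * b).
Proof.
  intros Hf; replace (c * a) with (c * a + 0) in * by ring; replace (c * b) with (c * b + 0) in * by ring.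
  rewrite <- (RInt_comp_lin f c 0 a b Hf); apply RInt_ext; intros t _.
  change (c * f (c * t) = c * f (c * t + 0)); rewrite Rplus_0_r; reflexivity.
Qed.

Lemma is_RInt_comp_affine f s m a b l : s <> 0 ->
  is_RInt f ((a - m) / s) ((b - m) / s) l -> is_RInt (fun t => f ((t - m) / s)) a b (s * l).
Proof.
  intros Hs Hf.
  replace ((a - m) / s) with (/ s * a + - m / s) in Hf by (field; lra).
  replace ((b - m) / s) with (/ s * b + - m / s) in Hf by (field; lra).
  pose proof (is_RInt_scal _ _ _ s _ (is_RInt_comp_lin f _ _ a b l Hf)) as H.
  apply (is_RInt_ext _ (fun t => f ((t - m) / s))) in H; [exact H|].
  intros t _; change (s * (/ s * f (/ s * t + - m / s)) = f ((t - m) / s)).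
  replace (/ s * t + - m / s) with ((t - m) / s) by (field; lra); field; lra.
Qed.

Lemma RInt_comp_opp_R f a b : ex_RInt f (- a) (- b) ->
  RInt (fun x => f (- x)) a b = - RInt f (- a) (- b).
Proof.
  intros Hf; apply is_RInt_unique.
  replace (- RInt f (- a) (- b)) with (-1 * RInt f (- a) (- b)) by ring.
  apply (is_RInt_ext (fun t => f ((t - 0) / -1))); [intros t _; f_equal; field|].
  apply is_RInt_comp_affine; [lra|].
  replace ((a - 0) / -1) with (- a) by field; replace ((b - 0) / -1) with (- b) by field.
  exact (RInt_correct f _ _ Hf).
Qed.

Lemma RInt_sym_odd f M : (forall a b, ex_RInt f a b) -> (forall x, f (- x) = - f x) ->
  RInt f (- M) M = 0.
Proof.
  intros Ef Hodd.
  assert (E : RInt (fun x => f (- x)) M (- M) = RInt (fun x => - f x) M (- M))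
    by (apply RInt_ext_R; intros x; apply Hodd).
  rewrite RInt_comp_opp_R, RInt_opp_R, Ropp_involutive, (RInt_swap_R f (- M) M) in E
    by apply Ef.
  lra.
Qed.

Lemma RInt_sym_even f M : (forall a b, ex_RInt f a b) -> (forall x, f (- x) = f x) ->
  RInt f (- M) M = 2 * RInt f 0 M.
Proof.
  intros Ef Heven.
  assert (E : RInt (fun x => f (- x)) M 0 = RInt f M 0)
    by (apply RInt_ext_R; intros x; apply Heven).
  rewrite RInt_comp_opp_R, Ropp_0, (RInt_swap_R f 0 M) in E by apply Ef.
  rewrite <- (RInt_Chasles f (- M) 0 M (Ef _ _) (Ef _ _)).
  change (RInt f (- M) 0 + RInt f 0 M = 2 * RInt f 0 M); lra.
Qed.

Definition is_RInt_line (f : R -> R) (l : R) : Prop :=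
  (forall a b, ex_RInt f a b) /\
  forall eps, 0 < eps -> exists M, 0 < M /\
    forall a b, a <= - M -> M <= b -> Rabs (RInt f a b - l) < eps.

Lemma improper_integral_of_is_RInt_line f l :
  is_RInt_line f l -> improper_integral f l.
Proof.
  intros [Hf H] eps Heps; destruct (H eps Heps) as [M [HM HMab]].
  exists M; split; [exact HM|]; intros a b Ha Hb.
  exists (ex_RInt_Reals_0 _ _ _ (Hf a b)); rewrite <- RInt_Reals; auto.
Qed.

Lemma improper_integral_unique f l1 l2 :
  improper_integral f l1 -> improper_integral f l2 -> l1 = l2.
Proof.
  intros H1 H2.
  enough (Hle : Rabs (l1 - l2) <= 0) by (revert Hle; unfold Rabs; destruct Rcase_abs; lra).
  apply Rle_plus_epsilon; intros eps Heps.
  destruct (H1 (eps / 2)) as [M1 [_ K1]]; [lra|].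
  destruct (H2 (eps / 2)) as [M2 [_ K2]]; [lra|].
  set (M := Rmax M1 M2).
  destruct (K1 (- M) M) as [p1 Q1]; [unfold M; pose proof (Rmax_l M1 M2); lra | apply Rmax_l|].
  destruct (K2 (- M) M) as [p2 Q2]; [unfold M; pose proof (Rmax_r M1 M2); lra | apply Rmax_r|].
  rewrite (RiemannInt_P5 p2 p1) in Q2.
  replace (l1 - l2) with ((RiemannInt p1 - l2) + - (RiemannInt p1 - l1)) by ring.
  pose proof (Rabs_triang (RiemannInt p1 - l2) (- (RiemannInt p1 - l1))) as T.
  rewrite Rabs_Ropp in T; lra.
Qed.

Lemma is_RInt_line_ext f g l :
  (forall x, f x = g x) -> is_RInt_line f l -> is_RInt_line g l.
Proof. intros H; replace g with f; [auto | apply functional_extensionality; auto]. Qed.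

Lemma is_RInt_line_plus f g lf lg :
  is_RInt_line f lf -> is_RInt_line g lg -> is_RInt_line (fun x => f x + g x) (lf + lg).
Proof.
  intros [Ef Hf] [Eg Hg]; split.
  { intros a b; exact (ex_RInt_plus f g a b (Ef a b) (Eg a b)). }
  intros eps Heps.
  destruct (Hf (eps / 2)) as [Mf [HMf Kf]]; [lra|].
  destruct (Hg (eps / 2)) as [Mg [HMg Kg]]; [lra|].
  exists (Rmax Mf Mg); split; [apply (Rlt_le_trans _ _ _ HMf), Rmax_l|].
  intros a b Ha Hb; pose proof (Rmax_l Mf Mg); pose proof (Rmax_r Mf Mg).
  specialize (Kf a b ltac:(lra) ltac:(lra)); specialize (Kg a b ltac:(lra) ltac:(lra)).
  rewrite RInt_plus_R by auto.
  replace (RInt f a b + RInt g a b - (lf + lg))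
    with ((RInt f a b - lf) + (RInt g a b - lg)) by ring.
  pose proof (Rabs_triang (RInt f a b - lf) (RInt g a b - lg)); lra.
Qed.

Lemma is_RInt_line_scal c f l :
  is_RInt_line f l -> is_RInt_line (fun x => c * f x) (c * l).
Proof.
  intros [Ef Hf]; split.
  { intros a b; apply ex_RInt_scal_R, Ef. }
  intros eps Heps.
  assert (Hc : 0 < Rabs c + 1) by (pose proof (Rabs_pos c); lra).
  destruct (Hf (eps / (Rabs c + 1))) as [M [HM K]]; [apply Rdiv_lt_0_compat; lra|].
  exists M; split; [exact HM|]; intros a b Ha Hb; specialize (K a b Ha Hb).
  rewrite RInt_scal_R by auto.
  replace (c * RInt f a b - c * l) with (c * (RInt f a b - l)) by ring.
  rewrite Rabs_mult.
  apply Rle_lt_trans with ((Rabs c + 1) * Rabs (RInt f a b - l)).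
  { pose proof (Rabs_pos (RInt f a b - l)); nra. }
  apply (Rmult_lt_compat_l (Rabs c + 1)) in K; [|lra].
  replace ((Rabs c + 1) * (eps / (Rabs c + 1))) with eps in K by (field; lra); exact K.
Qed.

Lemma is_RInt_line_comp_affine f s m l : 0 < s ->
  is_RInt_line f l -> is_RInt_line (fun t => f ((t - m) / s)) (s * l).
Proof.
  intros Hs [Ef Hf].
  assert (Eg : forall a b, is_RInt (fun t => f ((t - m) / s)) a b
                 (s * RInt f ((a - m) / s) ((b - m) / s))).
  { intros a b; apply is_RInt_comp_affine; [lra|]; exact (RInt_correct f _ _ (Ef _ _)). }
  split; [intros a b; eexists; apply Eg|].
  intros eps Heps.
  destruct (Hf (eps / s)) as [M [HM K]]; [apply Rdiv_lt_0_compat; lra|].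
  exists (Rabs m + s * M); split; [pose proof (Rabs_pos m); nra|].
  intros a b Ha Hb; rewrite (is_RInt_unique _ a b _ (Eg a b)).
  pose proof (Rle_abs m); pose proof (Rle_abs (- m)); rewrite Rabs_Ropp in *.
  assert (Ka : (a - m) / s <= - M).
  { apply (Rmult_le_reg_r s); [lra|]; unfold Rdiv; rewrite Rmult_assoc, Rinv_l; lra. }
  assert (Kb : M <= (b - m) / s).
  { apply (Rmult_le_reg_r s); [lra|]; unfold Rdiv; rewrite Rmult_assoc, Rinv_l; lra. }
  specialize (K _ _ Ka Kb).
  replace (s * RInt f ((a - m) / s) ((b - m) / s) - s * l)
    with (s * (RInt f ((a - m) / s) ((b - m) / s) - l)) by ring.
  rewrite Rabs_mult, (Rabs_right s) by lra.
  apply (Rmult_lt_compat_l s) in K; [|lra].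
  replace (s * (eps / s)) with eps in K by (field; lra); exact K.
Qed.

Lemma is_RInt_inv_sq C a b : a <= b -> 0 < a \/ b < 0 ->
  is_RInt (fun x => C / (x * x)) a b (C / a - C / b).
Proof.
  intros Hab Hsign.
  assert (Hx : forall x, Rmin a b <= x <= Rmax a b -> x <> 0).
  { rewrite Rmin_left, Rmax_right by lra; intros x Hx; lra. }
  replace (C / a - C / b) with (minus ((fun x => - C / x) b) ((fun x => - C / x) a))
    by (unfold minus, plus, opp; simpl; field; split; lra).
  apply (is_RInt_derive (V := R_CompleteNormedModule)).
  - intros x Hxab; specialize (Hx x Hxab); auto_derive; [exact Hx | field; exact Hx].
  - intros x Hxab; specialize (Hx x Hxab); apply continuity_pt_filterlim.
    apply continuity_pt_div; [apply continuity_pt_const; intros u v; auto | reg | nra].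
Qed.

Lemma dominating_const_nonneg f C :
  (forall x, Rabs (f x) <= C / (1 + x ^ 2)) -> 0 <= C.
Proof.
  intros Hdom; specialize (Hdom 0); pose proof (Rabs_pos (f 0)).
  replace (C / (1 + 0 ^ 2)) with C in Hdom by (simpl; field); lra.
Qed.

Lemma abs_RInt_le_inv_sq f C a b : a <= b -> 0 < a \/ b < 0 -> ex_RInt f a b ->
  (forall x, Rabs (f x) <= C / (1 + x ^ 2)) -> Rabs (RInt f a b) <= C / a - C / b.
Proof.
  intros Hab Hsign Hf Hdom.
  pose proof (dominating_const_nonneg f C Hdom) as HC.
  apply (norm_RInt_le f (fun x => C / (x * x)) a b); auto.
  - intros x Hx; eapply Rle_trans; [apply Hdom|].
    unfold Rdiv; apply Rmult_le_compat_l; [exact HC|].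
    apply Rinv_le_contravar; simpl; nra.
  - exact (RInt_correct f a b Hf).
  - apply is_RInt_inv_sq; auto.
Qed.

Lemma is_RInt_line_of_sym_lim f C l : (forall a b, ex_RInt f a b) ->
  (forall x, Rabs (f x) <= C / (1 + x ^ 2)) ->
  (forall eps, 0 < eps -> exists M0, forall M, M0 <= M -> Rabs (RInt f (- M) M - l) < eps) ->
  is_RInt_line f l.
Proof.
  intros Ef Hdom Hsym; split; [exact Ef|]; intros eps Heps.
  destruct (Hsym (eps / 2)) as [M0 HM0]; [lra|].
  pose proof (dominating_const_nonneg f C Hdom) as HC.
  set (M := Rmax (Rmax M0 1) (4 * C / eps)).
  assert (M1 : 1 <= M) by (unfold M; pose proof (Rmax_l (Rmax M0 1) (4 * C / eps));
                           pose proof (Rmax_r M0 1); lra).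
  assert (M2 : M0 <= M) by (unfold M; pose proof (Rmax_l (Rmax M0 1) (4 * C / eps));
                            pose proof (Rmax_l M0 1); lra).
  assert (Tail : C / M <= eps / 4).
  { assert (M3 : 4 * C / eps <= M) by apply Rmax_r.
    apply (Rmult_le_reg_r (4 * M / eps)); [apply Rdiv_lt_0_compat; lra|].
    replace (C / M * (4 * M / eps)) with (4 * C / eps) by (field; lra).
    replace (eps / 4 * (4 * M / eps)) with M by (field; lra); exact M3. }
  exists M; split; [lra|]; intros a b Ha Hb.
  rewrite <- (RInt_Chasles f a M b (Ef _ _) (Ef _ _)).
  rewrite <- (RInt_Chasles f a (- M) M (Ef _ _) (Ef _ _)).
  change (Rabs (RInt f a (- M) + RInt f (- M) M + RInt f M b - l) < eps).
  pose proof (abs_RInt_le_inv_sq f C a (- M) ltac:(lra) ltac:(lra) (Ef _ _) Hdom) as La.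
  pose proof (abs_RInt_le_inv_sq f C M b ltac:(lra) ltac:(lra) (Ef _ _) Hdom) as Lb.
  assert (Cb : 0 <= C / b) by (apply Rdiv_le_0_compat; lra).
  assert (Ca : C / a <= 0) by (unfold Rdiv; apply Rmult_le_0_l; [lra|];
                                 apply Rlt_le, Rinv_lt_0_compat; lra).
  replace (C / - M) with (- (C / M)) in La by (field; lra).
  specialize (HM0 M M2).
  replace (RInt f a (- M) + RInt f (- M) M + RInt f M b - l)
    with (RInt f a (- M) + (RInt f (- M) M - l) + RInt f M b) by ring.
  pose proof (Rabs_triang (RInt f a (- M) + (RInt f (- M) M - l)) (RInt f M b)).
  pose proof (Rabs_triang (RInt f a (- M)) (RInt f (- M) M - l)).
  lra.
Qed.

Definition is_RInt_plane (f : R -> R -> R) (l : R) : Prop :=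
  exists F, (forall u, is_RInt_line (f u) (F u)) /\ is_RInt_line F l.

Lemma integral_R2_of_is_RInt_plane f l : is_RInt_plane f l -> integral_R2 f l.
Proof.
  intros [F [HF Hl]]; exists F; split; [|apply improper_integral_of_is_RInt_line; exact Hl].
  intros u; apply improper_integral_of_is_RInt_line, HF.
Qed.

Lemma integral_R2_unique f l1 l2 : integral_R2 f l1 -> integral_R2 f l2 -> l1 = l2.
Proof.
  intros [F1 [H1 G1]] [F2 [H2 G2]].
  assert (E : F1 = F2)
    by (apply functional_extensionality; intros u; exact (improper_integral_unique _ _ _ (H1 u) (H2 u))).
  subst F2; exact (improper_integral_unique _ _ _ G1 G2).
Qed.

Lemma is_RInt_plane_ext f g l :
  (forall u v, f u v = g u v) -> is_RInt_plane f l -> is_RInt_plane g l.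
Proof.
  intros Hfg [F [HF Hl]]; exists F; split; [|exact Hl].
  intros u; apply (is_RInt_line_ext (f u)); [apply Hfg | apply HF].
Qed.

Lemma is_RInt_plane_plus f g lf lg :
  is_RInt_plane f lf -> is_RInt_plane g lg -> is_RInt_plane (fun u v => f u v + g u v) (lf + lg).
Proof.
  intros [F [HF Hlf]] [G [HG Hlg]]; exists (fun u => F u + G u); split;
    [intros u; apply is_RInt_line_plus; auto | apply is_RInt_line_plus; auto].
Qed.

Lemma is_RInt_plane_scal c f l :
  is_RInt_plane f l -> is_RInt_plane (fun u v => c * f u v) (c * l).
Proof.
  intros [F [HF Hl]]; exists (fun u => c * F u); split;
    [intros u; apply is_RInt_line_scal; auto | apply is_RInt_line_scal; auto].
Qed.

(** * The Gaussian integral *)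

Definition gauss (t : R) : R := exp (- (t * t)).

Lemma ex_RInt_gauss a b : ex_RInt gauss a b.
Proof. apply ex_RInt_of_continuous; intros x; apply continuity_pt_filterlim; unfold gauss; reg. Qed.

(* Chosen so that [(RInt gauss 0 x)^2 + gauss_aux x] has derivative zero. *)
Definition gauss_aux (x : R) : R :=
  RInt (fun t => exp (- (x * x) * (1 + t * t)) / (1 + t * t)) 0 1.

Lemma RInt_gauss_scaled x :
  RInt (fun t => x * exp (- (x * x) * (1 + t * t))) 0 1 = gauss x * RInt gauss 0 x.
Proof.
  replace (RInt gauss 0 x) with (RInt gauss (x * 0) (x * 1)) by (f_equal; ring).
  rewrite <- RInt_comp_scale by apply ex_RInt_gauss.
  rewrite <- RInt_scal_R.
  2: { apply ex_RInt_of_continuous; intros t; apply continuity_pt_filterlim; unfold gauss; reg. }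
  apply RInt_ext_R; intros t; unfold gauss.
  replace (- (x * x) * (1 + t * t)) with (- (x * x) + - (x * t * (x * t))) by ring.
  rewrite exp_plus; ring.
Qed.

Lemma is_derive_gauss_aux x : is_derive gauss_aux x (- 2 * gauss x * RInt gauss 0 x).
Proof.
  set (u := fun y t => exp (- (y * y) * (1 + t * t)) / (1 + t * t)).
  assert (Du : forall y t, is_derive (fun z => u z t) y (- 2 * (y * exp (- (y * y) * (1 + t * t))))).
  { intros y t; unfold u; auto_derive; [nra | field; nra]. }
  replace (- 2 * gauss x * RInt gauss 0 x)
    with (RInt (fun t => - 2 * (x * exp (- (x * x) * (1 + t * t)))) 0 1).
  2: { rewrite RInt_scal_R, RInt_gauss_scaled; [rewrite Rmult_assoc; reflexivity|].
       apply ex_RInt_of_continuous; intros t; apply continuity_pt_filterlim; reg. }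
  replace (RInt (fun t => - 2 * (x * exp (- (x * x) * (1 + t * t)))) 0 1)
    with (RInt (fun t => Derive (fun z => u z t) x) 0 1).
  2: { apply RInt_ext; intros t _; exact (is_derive_unique _ _ _ (Du x t)). }
  apply (is_derive_RInt_param u 0 1 x).
  - apply filter_forall; intros y t _; eexists; apply Du.
  - intros t _.
    apply (continuity_2d_pt_ext (fun y s => - 2 * (y * exp (- (y * y) * (1 + s * s))))).
    { intros y s; symmetry; apply is_derive_unique, Du. }
    repeat first
      [ apply continuity_2d_pt_mult | apply continuity_2d_pt_plus | apply continuity_2d_pt_opp
      | apply continuity_2d_pt_const | apply continuity_2d_pt_id1 | apply continuity_2d_pt_id2
      | apply (continuity_1d_2d_pt_comp exp); [apply derivable_continuous_pt, derivable_pt_exp|] ].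
  - apply filter_forall; intros y; apply ex_RInt_of_continuous; intros t.
    apply continuity_pt_filterlim; unfold u; apply continuity_pt_div; [reg | reg | nra].
Qed.

Lemma is_derive_zero_const (h : R -> R) x y : (forall z, is_derive h z 0) -> h x = h y.
Proof.
  intros Dh.
  assert (H : is_RInt (fun _ => 0) y x (minus (h x) (h y)))
    by (apply (is_RInt_derive (V := R_CompleteNormedModule)); intros;
        [apply Dh | apply continuous_const]).
  apply (is_RInt_unique (V := R_CompleteNormedModule)) in H; rewrite RInt_const in H.
  change ((x - y) * 0 = h x + - h y) in H; lra.
Qed.

Lemma gauss_aux_0 : gauss_aux 0 = PI / 4.
Proof.
  unfold gauss_aux; apply is_RInt_unique.
  replace (PI / 4) with (minus (atan 1) (atan 0))
    by (rewrite atan_0, atan_1; unfold minus, plus, opp; simpl; ring).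
  apply (is_RInt_ext (fun t => / (1 + t²))).
  { intros t _; change (/ (1 + t²) = exp (- (0 * 0) * (1 + t * t)) / (1 + t * t)).
    replace (- (0 * 0) * (1 + t * t)) with 0 by ring; rewrite exp_0; unfold Rsqr; field; nra. }
  apply (is_RInt_derive (V := R_CompleteNormedModule)); intros t _;
    [apply is_derive_atan | apply continuity_pt_filterlim; reg; unfold Rsqr; nra].
Qed.

Lemma RInt_gauss_half_sq x : RInt gauss 0 x * RInt gauss 0 x + gauss_aux x = PI / 4.
Proof.
  assert (DI : forall z, is_derive (RInt gauss 0) z (gauss z)).
  { intros z; apply (is_derive_RInt gauss _ 0 z).
    - apply filter_forall; intros b; exact (RInt_correct gauss 0 b (ex_RInt_gauss _ _)).
    - apply continuity_pt_filterlim; unfold gauss; reg. }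
  rewrite (is_derive_zero_const (fun y => RInt gauss 0 y * RInt gauss 0 y + gauss_aux y) x 0).
  - rewrite RInt_point, gauss_aux_0; change (0 * 0 + PI / 4 = PI / 4); ring.
  - intros z.
    pose proof (is_derive_plus _ _ z _ _
      (is_derive_mult (RInt gauss 0) (RInt gauss 0) z _ _ (DI z) (DI z) Rmult_comm)
      (is_derive_gauss_aux z)) as D.
    simpl in D; unfold plus, scal, mult in D; simpl in D.
    match type of D with is_derive _ _ ?d => replace d with 0 in D by ring end; exact D.
Qed.

Lemma exp_le_compat x y : x <= y -> exp x <= exp y.
Proof. intros [H|H]; [left; apply exp_increasing; exact H | right; rewrite H; reflexivity]. Qed.

Lemma exp_neg_le_inv y : 0 <= y -> exp (- y) <= / (1 + y).
Proof. intros Hy; pose proof (exp_ineq1_le y); rewrite exp_Ropp; apply Rinv_le_contravar; lra. Qed.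

Lemma gauss_pos x : 0 < gauss x.
Proof. apply exp_pos. Qed.

Lemma gauss_le_inv x : gauss x <= 1 / (1 + x ^ 2).
Proof. unfold gauss; eapply Rle_trans; [apply exp_neg_le_inv; nra | right; simpl; field; nra]. Qed.

Lemma gauss_aux_bounds x : 0 <= gauss_aux x <= gauss x.
Proof.
  assert (Ex : ex_RInt (fun t => exp (- (x * x) * (1 + t * t)) / (1 + t * t)) 0 1)
    by (apply ex_RInt_of_continuous; intros t; apply continuity_pt_filterlim;
        apply continuity_pt_div; [reg | reg | nra]).
  unfold gauss_aux; split.
  - apply RInt_ge_0; [lra | exact Ex|]; intros t _.
    apply Rlt_le, Rdiv_lt_0_compat; [apply exp_pos | nra].
  - apply Rle_trans with (RInt (fun _ => gauss x) 0 1).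
    2: { rewrite RInt_const; change ((1 - 0) * gauss x <= gauss x); lra. }
    apply RInt_le; [lra | exact Ex | apply ex_RInt_const|]; intros t _.
    assert (Hd : exp (- (x * x) * (1 + t * t)) <= gauss x) by (apply exp_le_compat; nra).
    apply Rle_trans with (exp (- (x * x) * (1 + t * t))); [|exact Hd].
    unfold Rdiv; rewrite <- (Rmult_1_r (exp _)) at 2; apply Rmult_le_compat_l;
      [apply Rlt_le, exp_pos | rewrite <- Rinv_1; apply Rinv_le_contravar; nra].
Qed.

Lemma one_lt_sqrt_PI : 1 < sqrt PI.
Proof.
  rewrite <- sqrt_1; apply sqrt_lt_1_alt; pose proof PI_RGT_0; pose proof PI2_1; lra.
Qed.

Lemma RInt_gauss_sym_error M : 0 <= M -> Rabs (RInt gauss (- M) M - sqrt PI) <= 4 * gauss M.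
Proof.
  intros HM.
  rewrite RInt_sym_even by (apply ex_RInt_gauss || (intros; unfold gauss; f_equal; ring)).
  pose proof (RInt_gauss_half_sq M) as Hsq; pose proof (gauss_aux_bounds M) as Haux.
  pose proof (RInt_ge_0 gauss 0 M HM (ex_RInt_gauss _ _) (fun x _ => Rlt_le _ _ (gauss_pos x))).
  pose proof one_lt_sqrt_PI; pose proof (sqrt_sqrt PI (Rlt_le _ _ PI_RGT_0)).
  set (I := RInt gauss 0 M) in *; set (r := sqrt PI) in *.
  assert (Hle : 2 * I <= r) by nra.
  rewrite Rabs_left1 by lra.
  assert ((r - 2 * I) * (r + 2 * I) = 4 * gauss_aux M) by nra.
  nra.
Qed.

(** * Gaussian wave packets *)

Definition gauss_cos_sym (b M : R) : R := RInt (fun x => gauss x * cos (b * x)) (- M) M.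

Lemma ex_RInt_gauss_trig (g : R -> R) a b : (forall x, continuous g x) ->
  ex_RInt (fun x => gauss x * g x) a b.
Proof.
  intros Hg; apply ex_RInt_of_continuous; intros x.
  apply (continuous_mult gauss g); [apply continuity_pt_filterlim; unfold gauss; reg | apply Hg].
Qed.

Lemma continuous_cos_lin b x : continuous (fun x => cos (b * x)) x.
Proof. apply continuity_pt_filterlim; reg. Qed.

Lemma continuous_sin_lin b x : continuous (fun x => sin (b * x)) x.
Proof. apply continuity_pt_filterlim; reg. Qed.

Lemma RInt_gauss_sin_moment b M :
  RInt (fun x => - x * gauss x * sin (b * x)) (- M) M = gauss M * sin (b * M) - b / 2 * gauss_cos_sym b M.
Proof.
  assert (Ec : forall a a', ex_RInt (fun x => gauss x * cos (b * x)) a a')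
    by (intros; apply ex_RInt_gauss_trig, continuous_cos_lin).
  assert (Es : ex_RInt (fun x => - x * gauss x * sin (b * x)) (- M) M).
  { apply ex_RInt_of_continuous; intros x; apply continuity_pt_filterlim; unfold gauss; reg. }
  assert (H : is_RInt (fun x => 2 * (- x * gauss x * sin (b * x)) + b * (gauss x * cos (b * x)))
                (- M) M (minus (gauss M * sin (b * M)) (gauss (- M) * sin (b * - M)))).
  { apply (is_RInt_derive (V := R_CompleteNormedModule) (fun x => gauss x * sin (b * x)));
      intros x _; [unfold gauss; auto_derive; [auto | ring] |].
    apply continuity_pt_filterlim; unfold gauss; reg. }
  apply (is_RInt_unique (V := R_CompleteNormedModule)) in H.
  rewrite RInt_plus_R, !RInt_scal_R in H by (auto || apply ex_RInt_scal_R; auto).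
  change (2 * RInt (fun x => - x * gauss x * sin (b * x)) (- M) M + b * gauss_cos_sym b M
          = gauss M * sin (b * M) + - (gauss (- M) * sin (b * - M))) in H.
  replace (gauss (- M)) with (gauss M) in H by (unfold gauss; f_equal; ring).
  replace (b * - M) with (- (b * M)) in H by ring; rewrite sin_neg in H; lra.
Qed.

Lemma is_derive_gauss_cos_sym b M :
  is_derive (fun c => gauss_cos_sym c M) b (gauss M * sin (b * M) - b / 2 * gauss_cos_sym b M).
Proof.
  set (j := fun c x => gauss x * cos (c * x)).
  assert (Dj : forall c x, is_derive (fun c' => j c' x) c (- x * gauss x * sin (c * x)))
    by (intros c x; unfold j, gauss; auto_derive; [auto | ring]).
  rewrite <- RInt_gauss_sin_moment.
  replace (RInt (fun x => - x * gauss x * sin (b * x)) (- M) M)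
    with (RInt (fun x => Derive (fun c => j c x) b) (- M) M)
    by (apply RInt_ext; intros x _; exact (is_derive_unique _ _ _ (Dj b x))).
  apply (is_derive_RInt_param j (- M) M b).
  - apply filter_forall; intros c x _; eexists; apply Dj.
  - intros x _.
    apply (continuity_2d_pt_ext (fun c y => - y * exp (- (y * y)) * sin (c * y))).
    { intros c y; symmetry; apply is_derive_unique, Dj. }
    repeat first
      [ apply continuity_2d_pt_mult | apply continuity_2d_pt_opp
      | apply continuity_2d_pt_id1 | apply continuity_2d_pt_id2
      | apply (continuity_1d_2d_pt_comp exp); [apply derivable_continuous_pt, derivable_pt_exp|]
      | apply (continuity_1d_2d_pt_comp sin); [apply derivable_continuous_pt, derivable_pt_sin|] ].
  - apply filter_forall; intros c; apply ex_RInt_gauss_trig, continuous_cos_lin.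
Qed.

(* Without the boundary term [gauss M * sin (c M)] of the integration by parts, the weighted
   integral [exp (c^2/4) * gauss_cos_sym c M] would not depend on [c]. *)
Lemma gauss_cos_sym_weighted_drift b M :
  Rabs (exp (b * b / 4) * gauss_cos_sym b M - RInt gauss (- M) M)
  <= Rabs b * (exp (b * b / 4) * gauss M).
Proof.
  set (P := fun c => exp (c * c / 4) * gauss_cos_sym c M).
  assert (DP : forall c : R, is_derive P c (exp (c * c / 4) * gauss M * sin (c * M))).
  { intros c; unfold P.
    replace (exp (c * c / 4) * gauss M * sin (c * M))
      with ((c / 2) * exp (c * c / 4) * gauss_cos_sym c M
            + exp (c * c / 4) * (gauss M * sin (c * M) - c / 2 * gauss_cos_sym c M)) by ring.
    apply (is_derive_mult (fun c => exp (c * c / 4)) (fun c => gauss_cos_sym c M));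
      [auto_derive; [auto | unfold Rdiv; field] | apply is_derive_gauss_cos_sym
      | intros; apply Rmult_comm]. }
  replace (RInt gauss (- M) M) with (P 0).
  2: { unfold P, gauss_cos_sym; replace (0 * 0 / 4) with 0 by field; rewrite exp_0, Rmult_1_l.
       apply RInt_ext_R; intros x; rewrite Rmult_0_l, cos_0; ring. }
  assert (H : is_RInt (fun c => exp (c * c / 4) * gauss M * sin (c * M)) 0 b (minus (P b) (P 0)))
    by (apply (is_RInt_derive (V := R_CompleteNormedModule)); intros c _;
        [apply DP | apply continuity_pt_filterlim; unfold gauss; reg]).
  replace (Rabs b) with (Rabs (b - 0)) by (f_equal; ring).
  apply (norm_RInt_le_const_abs _ 0 b _ (exp (b * b / 4) * gauss M)) in H; [exact H|].
  intros c Hc; change (Rabs (exp (c * c / 4) * gauss M * sin (c * M)) <= exp (b * b / 4) * gauss M).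
  rewrite !Rabs_mult, !Rabs_pos_eq by (apply Rlt_le, exp_pos).
  assert (exp (c * c / 4) <= exp (b * b / 4)).
  { apply exp_le_compat; assert (c * c <= b * b); [|lra].
    destruct (Rle_dec 0 b); [rewrite Rmin_left, Rmax_right in Hc by lra; nra
                            | rewrite Rmin_right, Rmax_left in Hc by lra; nra]. }
  assert (Rabs (sin (c * M)) <= 1) by apply Rabs_le, SIN_bound.
  pose proof (exp_pos (c * c / 4)); pose proof (gauss_pos M).
  apply Rle_trans with (exp (c * c / 4) * gauss M * 1);
    [apply Rmult_le_compat_l; [nra | assumption] | nra].
Qed.

Lemma gauss_cos_sym_error b M : 0 <= M ->
  Rabs (gauss_cos_sym b M - sqrt PI * exp (- (b * b) / 4)) <= (Rabs b + 4) * gauss M.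
Proof.
  intros HM.
  set (e := exp (- (b * b) / 4)).
  assert (He : e * exp (b * b / 4) = 1) by (unfold e; rewrite <- exp_plus, <- exp_0; f_equal; field).
  assert (He0 : 0 < e <= 1) by (split; [apply exp_pos | unfold e; rewrite <- exp_0; apply exp_le_compat; nra]).
  pose proof (gauss_cos_sym_weighted_drift b M) as Hdrift; pose proof (RInt_gauss_sym_error M HM).
  replace (gauss_cos_sym b M) with (e * (exp (b * b / 4) * gauss_cos_sym b M)) at 1
    by (rewrite <- Rmult_assoc, He; ring).
  replace (e * (exp (b * b / 4) * gauss_cos_sym b M) - sqrt PI * e)
    with (e * (exp (b * b / 4) * gauss_cos_sym b M - RInt gauss (- M) M)
          + e * (RInt gauss (- M) M - sqrt PI)) by ring.
  eapply Rle_trans; [apply Rabs_triang|]; rewrite !Rabs_mult, Rabs_pos_eq by lra.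
  assert (e * Rabs (exp (b * b / 4) * gauss_cos_sym b M - RInt gauss (- M) M) <= Rabs b * gauss M).
  { eapply Rle_trans; [apply Rmult_le_compat_l; [lra | exact Hdrift]|].
    right; rewrite <- (Rmult_1_l (Rabs b * gauss M)), <- He; ring. }
  pose proof (Rabs_pos (RInt gauss (- M) M - sqrt PI)).
  nra.
Qed.

Lemma gauss_tail_small K eps : 0 <= K -> 0 < eps ->
  exists M0, 0 <= M0 /\ forall M, M0 <= M -> K * gauss M < eps.
Proof.
  intros HK He; exists (Rmax 1 ((K + 1) / eps)).
  pose proof (Rmax_l 1 ((K + 1) / eps)); pose proof (Rmax_r 1 ((K + 1) / eps)).
  split; [lra|]; intros M HM.
  assert (H1 : gauss M <= / (1 + M * M)) by (apply exp_neg_le_inv; nra).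
  assert (H3 : K + 1 <= eps * M).
  { apply (Rmult_le_reg_r (/ eps)); [apply Rinv_0_lt_compat; lra|].
    replace (eps * M * / eps) with M by (field; lra); unfold Rdiv in *; lra. }
  apply Rle_lt_trans with (K * / (1 + M * M)); [apply Rmult_le_compat_l; auto|].
  apply (Rmult_lt_reg_r (1 + M * M)); [nra|]; rewrite Rmult_assoc, Rinv_l by nra; nra.
Qed.

Lemma gauss_trig_dom (g : R -> R) : (forall x, Rabs (g x) <= 1) ->
  forall x, Rabs (gauss x * g x) <= 1 / (1 + x ^ 2).
Proof.
  intros Hg x; rewrite Rabs_mult, (Rabs_pos_eq (gauss x)) by apply Rlt_le, gauss_pos.
  eapply Rle_trans; [|apply gauss_le_inv].
  rewrite <- (Rmult_1_r (gauss x)) at 2; apply Rmult_le_compat_l; [apply Rlt_le, gauss_pos | apply Hg].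
Qed.

Lemma is_RInt_line_gauss_cos b :
  is_RInt_line (fun x => gauss x * cos (b * x)) (sqrt PI * exp (- (b * b) / 4)).
Proof.
  apply (is_RInt_line_of_sym_lim _ 1).
  - intros; apply ex_RInt_gauss_trig, continuous_cos_lin.
  - apply gauss_trig_dom; intros; apply Rabs_le, COS_bound.
  - intros eps Heps; destruct (gauss_tail_small (Rabs b + 4) eps) as [M0 [HM0 K]];
      [pose proof (Rabs_pos b); lra | exact Heps|].
    exists M0; intros M HM; eapply Rle_lt_trans; [apply (gauss_cos_sym_error b M); lra | auto].
Qed.

Lemma is_RInt_line_gauss_sin b : is_RInt_line (fun x => gauss x * sin (b * x)) 0.
Proof.
  apply (is_RInt_line_of_sym_lim _ 1).
  - intros; apply ex_RInt_gauss_trig, continuous_sin_lin.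
  - apply gauss_trig_dom; intros; apply Rabs_le, SIN_bound.
  - intros eps Heps; exists 0; intros M _.
    rewrite (RInt_sym_odd (fun x => gauss x * sin (b * x))), Rminus_0_r, Rabs_R0;
      [exact Heps | |].
    + intros; apply ex_RInt_gauss_trig, continuous_sin_lin.
    + intros x; replace (b * - x) with (- (b * x)) by ring; rewrite sin_neg.
      replace (gauss (- x)) with (gauss x) by (unfold gauss; f_equal; ring).
      change (gauss x * - sin (b * x) = - (gauss x * sin (b * x))); ring.
Qed.

Definition gauss_wave (s m be ga t : R) : R := exp (- ((t - m) / s) ^ 2) * cos (be * t + ga).

Lemma is_RInt_line_gauss_wave s m be ga : 0 < s ->
  is_RInt_line (gauss_wave s m be ga)
    (s * sqrt PI * exp (- (be * s) ^ 2 / 4) * cos (be * m + ga)).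
Proof.
  intros Hs; set (c := cos (be * m + ga)); set (sn := sin (be * m + ga)).
  pose proof (is_RInt_line_comp_affine _ s m _ Hs
    (is_RInt_line_plus _ _ _ _
       (is_RInt_line_scal c _ _ (is_RInt_line_gauss_cos (be * s)))
       (is_RInt_line_scal (- sn) _ _ (is_RInt_line_gauss_sin (be * s))))) as H.
  replace ((be * s) ^ 2) with (be * s * (be * s)) by ring.
  replace (s * sqrt PI * exp (- (be * s * (be * s)) / 4) * c)
    with (s * (c * (sqrt PI * exp (- (be * s * (be * s)) / 4)) + - sn * 0)) by ring.
  revert H; apply is_RInt_line_ext; intros t; unfold gauss_wave, gauss.
  replace (be * s * ((t - m) / s)) with (be * (t - m)) by (field; lra).
  replace (be * t + ga) with ((be * m + ga) + be * (t - m)) by ring.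
  replace (((t - m) / s) ^ 2) with ((t - m) / s * ((t - m) / s)) by ring.
  rewrite cos_plus; unfold c, sn; ring.
Qed.

Lemma is_RInt_plane_gauss_wave s m1 m2 al be ga : 0 < s ->
  is_RInt_plane (fun u v => gauss_wave s m1 0 0 u * gauss_wave s m2 be (al * u + ga) v)
    (PI * s ^ 2 * exp (- ((al * s) ^ 2 + (be * s) ^ 2) / 4) * cos (al * m1 + be * m2 + ga)).
Proof.
  intros Hs; set (w := s * sqrt PI * exp (- (be * s) ^ 2 / 4)).
  exists (fun u => gauss_wave s m1 0 0 u * (w * cos (be * m2 + (al * u + ga)))); split.
  - intros u; apply is_RInt_line_scal, is_RInt_line_gauss_wave, Hs.
  - apply (is_RInt_line_ext (fun u => w * gauss_wave s m1 al (be * m2 + ga) u)).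
    { intros u; unfold gauss_wave; rewrite Rmult_0_l, Rplus_0_r, cos_0.
      replace (be * m2 + (al * u + ga)) with (al * u + (be * m2 + ga)) by ring; ring. }
    replace (PI * s ^ 2 * exp (- ((al * s) ^ 2 + (be * s) ^ 2) / 4) * cos (al * m1 + be * m2 + ga))
      with (w * (s * sqrt PI * exp (- (al * s) ^ 2 / 4) * cos (al * m1 + (be * m2 + ga)))).
    + apply is_RInt_line_scal, is_RInt_line_gauss_wave, Hs.
    + unfold w; replace (al * m1 + (be * m2 + ga)) with (al * m1 + be * m2 + ga) by ring.
      replace (- ((al * s) ^ 2 + (be * s) ^ 2) / 4) with (- (be * s) ^ 2 / 4 + - (al * s) ^ 2 / 4)
        by field.
      pose proof (sqrt_sqrt PI (Rlt_le _ _ PI_RGT_0)) as Hpi; set (r := sqrt PI) in *.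
      rewrite exp_plus, <- Hpi; ring.
Qed.

Lemma is_RInt_plane_gauss s m1 m2 : 0 < s ->
  is_RInt_plane (fun u v => gauss_wave s m1 0 0 u * gauss_wave s m2 0 0 v) (PI * s ^ 2).
Proof.
  intros Hs; replace (PI * s ^ 2)
    with (PI * s ^ 2 * exp (- ((0 * s) ^ 2 + (0 * s) ^ 2) / 4) * cos (0 * m1 + 0 * m2 + 0)).
  - apply (is_RInt_plane_ext (fun u v => gauss_wave s m1 0 0 u * gauss_wave s m2 0 (0 * u + 0) v));
      [intros u v; rewrite Rmult_0_l, Rplus_0_r; reflexivity | apply is_RInt_plane_gauss_wave, Hs].
  - replace (- ((0 * s) ^ 2 + (0 * s) ^ 2) / 4) with 0 by field.
    replace (0 * m1 + 0 * m2 + 0) with 0 by ring; rewrite exp_0, cos_0; ring.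
Qed.

(** * Closed form of the Gabor distance *)

Definition gabor_exponent (lam sig dx dy t1 t2 : R) : R :=
  (dx ^ 2 + dy ^ 2) / (4 * sig ^ 2)
  + (sig * PI / lam) ^ 2 * ((cos t1 - cos t2) ^ 2 + (sin t1 - sin t2) ^ 2).

Definition gabor_phase (lam dx dy t1 t2 : R) : R :=
  PI / lam * ((cos t1 + cos t2) * dx + (sin t1 + sin t2) * dy).

Definition gabor_dist_sq_value (lam sig dx dy t1 t2 : R) : R :=
  2 * PI * sig ^ 2 * (1 - exp (- gabor_exponent lam sig dx dy t1 t2) * cos (gabor_phase lam dx dy t1 t2)).

Lemma rotU_rotV_sq x y th u v :
  rotU x y th u v ^ 2 + rotV x y th u v ^ 2 = (u - x) ^ 2 + (v - y) ^ 2.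
Proof.
  unfold rotU, rotV; pose proof (sin2_cos2 th) as H; unfold Rsqr in H.
  transitivity (((u - x) ^ 2 + (v - y) ^ 2) * (sin th * sin th + cos th * cos th)); [ring|].
  rewrite H; ring.
Qed.

Section GaborClosedForm.

Variables (lam sig x1 y1 t1 x2 y2 t2 : R).
Hypotheses (Hlam : 0 < lam) (Hsig : 0 < sig).

(* The phase of [psi_p1 (u, v)] minus that of [psi_p2 (u, v)] is [bx u + by_ v + g0]. *)
Let k := 2 * PI / lam.
Let bx := k * (cos t1 - cos t2).
Let by_ := k * (sin t1 - sin t2).
Let g0 := k * (x2 * cos t2 + y2 * sin t2 - (x1 * cos t1 + y1 * sin t1)).
Let overlap := exp (- ((x1 - x2) ^ 2 + (y1 - y2) ^ 2) / (4 * sig ^ 2)).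

Lemma gabor_diff_sq_expand u v :
  gabor_diff_sq lam sig x1 y1 t1 x2 y2 t2 u v =
  gauss_wave sig x1 0 0 u * gauss_wave sig y1 0 0 v
  + gauss_wave sig x2 0 0 u * gauss_wave sig y2 0 0 v
  + - 2 * overlap * (gauss_wave sig ((x1 + x2) / 2) 0 0 u
                     * gauss_wave sig ((y1 + y2) / 2) by_ (bx * u + g0) v).
Proof.
  unfold gabor_diff_sq, gabor_re, gabor_im, psi0_re, psi0_im, gauss_wave.
  rewrite !Rmult_0_l, !Rplus_0_r, !cos_0, !Rmult_1_r, !rotU_rotV_sq.
  set (p := 2 * PI * rotU x1 y1 t1 u v / lam); set (q := 2 * PI * rotU x2 y2 t2 u v / lam).
  replace (by_ * v + (bx * u + g0)) with (p - q)
    by (unfold p, q, by_, bx, g0, k, rotU; field; lra).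
  set (E1 := exp (- ((u - x1) ^ 2 + (v - y1) ^ 2) / (2 * sig ^ 2))).
  set (E2 := exp (- ((u - x2) ^ 2 + (v - y2) ^ 2) / (2 * sig ^ 2))).
  assert (H1 : E1 * E1 = exp (- ((u - x1) / sig) ^ 2) * exp (- ((v - y1) / sig) ^ 2))
    by (unfold E1; rewrite <- !exp_plus; f_equal; field; lra).
  assert (H2 : E2 * E2 = exp (- ((u - x2) / sig) ^ 2) * exp (- ((v - y2) / sig) ^ 2))
    by (unfold E2; rewrite <- !exp_plus; f_equal; field; lra).
  assert (H12 : E1 * E2 = overlap * (exp (- ((u - (x1 + x2) / 2) / sig) ^ 2)
                                      * exp (- ((v - (y1 + y2) / 2) / sig) ^ 2)))
    by (unfold E1, E2, overlap; rewrite <- !exp_plus; f_equal; field; lra).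
  pose proof (sin2_cos2 p) as Sp; pose proof (sin2_cos2 q) as Sq; unfold Rsqr in Sp, Sq.
  rewrite cos_minus.
  transitivity (E1 * E1 * (sin p * sin p + cos p * cos p) + E2 * E2 * (sin q * sin q + cos q * cos q)
                - 2 * (E1 * E2) * (cos p * cos q + sin p * sin q)); [ring|].
  rewrite Sp, Sq, H1, H2, H12; ring.
Qed.

Lemma gabor_dist_sq_closed_form :
  gabor_dist_sq lam sig x1 y1 t1 x2 y2 t2 (gabor_dist_sq_value lam sig (x1 - x2) (y1 - y2) t1 t2).
Proof.
  apply integral_R2_of_is_RInt_plane.
  apply (is_RInt_plane_ext _ _ _ (fun u v => eq_sym (gabor_diff_sq_expand u v))).
  replace (gabor_dist_sq_value lam sig (x1 - x2) (y1 - y2) t1 t2)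
    with (PI * sig ^ 2 + PI * sig ^ 2
          + - 2 * overlap * (PI * sig ^ 2 * exp (- ((bx * sig) ^ 2 + (by_ * sig) ^ 2) / 4)
                            * cos (bx * ((x1 + x2) / 2) + by_ * ((y1 + y2) / 2) + g0))).
  { apply is_RInt_plane_plus; [apply is_RInt_plane_plus; apply is_RInt_plane_gauss, Hsig|].
    apply is_RInt_plane_scal, is_RInt_plane_gauss_wave, Hsig. }
  unfold gabor_dist_sq_value, gabor_exponent, gabor_phase, overlap.
  replace (bx * ((x1 + x2) / 2) + by_ * ((y1 + y2) / 2) + g0)
    with (- (PI / lam * ((cos t1 + cos t2) * (x1 - x2) + (sin t1 + sin t2) * (y1 - y2))))
    by (unfold bx, by_, g0, k; field; lra).
  rewrite cos_neg.
  replace (- (((x1 - x2) ^ 2 + (y1 - y2) ^ 2) / (4 * sig ^ 2)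
               + (sig * PI / lam) ^ 2 * ((cos t1 - cos t2) ^ 2 + (sin t1 - sin t2) ^ 2)))
    with (- ((x1 - x2) ^ 2 + (y1 - y2) ^ 2) / (4 * sig ^ 2) + - ((bx * sig) ^ 2 + (by_ * sig) ^ 2) / 4)
    by (unfold bx, by_, k; field; lra).
  rewrite exp_plus; ring.
Qed.

End GaborClosedForm.

(** * Second-order expansion *)

Lemma exp_neg_taylor1 A : 0 <= A -> 0 <= exp (- A) - (1 - A) <= A ^ 2.
Proof.
  intros HA; split; [pose proof (exp_ineq1_le (- A)); lra|].
  pose proof (exp_ineq1_le A); rewrite exp_Ropp.
  apply Rle_trans with (/ (1 + A) - (1 - A)); [apply Rplus_le_compat_r, Rinv_le_contravar; lra|].
  apply (Rmult_le_reg_r (1 + A)); [lra|].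
  rewrite Rmult_minus_distr_r, Rinv_l by lra; simpl; nra.
Qed.

Lemma cos_taylor2 x : Rabs x <= 1 -> 0 <= cos x - (1 - x ^ 2 / 2) <= x ^ 4 / 24.
Proof.
  intros Hx; apply Rabs_le_between in Hx; pose proof PI2_1.
  destruct (cos_bound x 0) as [L U]; [lra | lra |].
  unfold cos_approx, cos_term in L, U; simpl in L, U.
  split; [eapply Rle_trans; [|apply Rplus_le_compat_r, L] | eapply Rle_trans; [apply Rplus_le_compat_r, U|]];
    right; field.
Qed.

Lemma one_sub_exp_cos_taylor A P : 0 <= A -> A + P ^ 2 <= 1 ->
  Rabs (1 - exp (- A) * cos P - (A + P ^ 2 / 2)) <= (A + P ^ 2) ^ 2.
Proof.
  intros HA HAP.
  assert (HP : Rabs P <= 1) by (apply Rabs_le; split; nra).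
  destruct (exp_neg_taylor1 A HA) as [E1 E2]; destruct (cos_taylor2 P HP) as [C1 C2].
  assert (Hc : Rabs (cos P) <= 1) by apply Rabs_le, COS_bound.
  replace (1 - exp (- A) * cos P - (A + P ^ 2 / 2))
    with (- (A * P ^ 2 / 2 + (1 - A) * (cos P - (1 - P ^ 2 / 2))
             + (exp (- A) - (1 - A)) * cos P)) by field.
  set (r1 := exp (- A) - (1 - A)) in *; set (r2 := cos P - (1 - P ^ 2 / 2)) in *.
  rewrite Rabs_Ropp; apply Rabs_le_between; apply Rabs_le_between in Hc.
  assert (0 <= P ^ 2) by nra; assert (P ^ 4 <= P ^ 2) by nra.
  split; nra.
Qed.

Lemma cos_sin_diff_sq t D :
  (cos (t + D) - cos t) ^ 2 + (sin (t + D) - sin t) ^ 2 = 2 - 2 * cos D.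
Proof.
  rewrite cos_plus, sin_plus; pose proof (sin2_cos2 t) as Ht; pose proof (sin2_cos2 D) as HD.
  unfold Rsqr in *.
  transitivity ((sin t * sin t + cos t * cos t) * ((cos D - 1) ^ 2 + sin D * sin D)); [ring|].
  rewrite Ht; nra.
Qed.

Lemma cos_sin_sum_sq t D :
  (cos (t + D) + cos t) ^ 2 + (sin (t + D) + sin t) ^ 2 = 2 + 2 * cos D.
Proof.
  rewrite cos_plus, sin_plus; pose proof (sin2_cos2 t) as Ht; pose proof (sin2_cos2 D) as HD.
  unfold Rsqr in *.
  transitivity ((sin t * sin t + cos t * cos t) * ((cos D + 1) ^ 2 + sin D * sin D)); [ring|].
  rewrite Ht; nra.
Qed.

Lemma dot2_sq_le a b u v : (a * u + b * v) ^ 2 <= (a ^ 2 + b ^ 2) * (u ^ 2 + v ^ 2).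
Proof.
  assert (E : (a ^ 2 + b ^ 2) * (u ^ 2 + v ^ 2) - (a * u + b * v) ^ 2 = (a * v - b * u) ^ 2) by ring.
  pose proof (pow2_ge_0 (a * v - b * u)); lra.
Qed.

Lemma abs_le_of_sq_le x y : 0 <= y -> x ^ 2 <= y ^ 2 -> Rabs x <= y.
Proof. intros Hy Hxy; apply Rabs_le; split; nra. Qed.

Definition gabor_taylor_const (lam sig : R) : R :=
  1 / (4 * sig ^ 2) + (sig * PI / lam) ^ 2 + 4 * (PI / lam) ^ 2.

Lemma norm3_sq dx dy D : norm3 dx dy D ^ 2 = dx ^ 2 + dy ^ 2 + D ^ 2.
Proof. unfold norm3; rewrite pow2_sqrt; [reflexivity | nra]. Qed.

Lemma gabor_taylor_const_nonneg lam sig : 0 < sig -> 0 <= gabor_taylor_const lam sig.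
Proof.
  intros Hsig; unfold gabor_taylor_const.
  pose proof (pow2_ge_0 (sig * PI / lam)); pose proof (pow2_ge_0 (PI / lam)).
  assert (0 < 1 / (4 * sig ^ 2)) by (apply Rdiv_lt_0_compat; nra); lra.
Qed.

Section GaborTaylor.

Variables (lam sig th0 dx dy D : R).
Hypotheses (Hlam : 0 < lam) (Hsig : 0 < sig).

Let k := PI / lam.
Let b := 1 / (4 * sig ^ 2).
Let m := (sig * PI / lam) ^ 2.
Let n := norm3 dx dy D.
Let q := dx ^ 2 + dy ^ 2.
Let E := gabor_exponent lam sig dx dy (th0 + D) th0.
Let P := gabor_phase lam dx dy (th0 + D) th0.
Let E0 := b * q + m * D ^ 2.
Let P0 := 2 * k * (cos th0 * dx + sin th0 * dy).

Lemma quad3_gmat_eq : quad3 (gmat lam sig th0) dx dy D = 2 * PI * sig ^ 2 * (E0 + P0 ^ 2 / 2).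
Proof.
  pose proof (sin2_cos2 th0) as U; unfold Rsqr in U.
  transitivity (2 * PI * sig ^ 2 * (E0 + P0 ^ 2 / 2)
                + 2 * sig ^ 2 * PI * b * q * (sin th0 * sin th0 + cos th0 * cos th0 - 1)).
  - unfold quad3, gmat, E0, P0, b, m, k, q; simpl; field; lra.
  - rewrite U; ring.
Qed.

Lemma gabor_exponent_eq : E = b * q + m * (2 - 2 * cos D).
Proof. unfold E, gabor_exponent, b, m, q; rewrite cos_sin_diff_sq; field; lra. Qed.

Lemma gabor_phase_sq_le : P ^ 2 <= 4 * k ^ 2 * q.
Proof.
  pose proof (dot2_sq_le (cos (th0 + D) + cos th0) (sin (th0 + D) + sin th0) dx dy) as H.
  rewrite cos_sin_sum_sq in H; fold q in H; pose proof (COS_bound D).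
  assert (0 <= q) by (unfold q; nra).
  replace (P ^ 2) with (k ^ 2 * ((cos (th0 + D) + cos th0) * dx + (sin (th0 + D) + sin th0) * dy) ^ 2)
    by (unfold P, gabor_phase, k; ring).
  replace (4 * k ^ 2 * q) with (k ^ 2 * (4 * q)) by ring.
  apply Rmult_le_compat_l; [apply pow2_ge_0 | nra].
Qed.

Lemma gabor_phase0_sq_le : P0 ^ 2 <= 4 * k ^ 2 * q.
Proof.
  pose proof (dot2_sq_le (cos th0) (sin th0) dx dy) as H.
  pose proof (sin2_cos2 th0) as U; unfold Rsqr in U.
  replace (cos th0 ^ 2 + sin th0 ^ 2) with 1 in H by (simpl; lra); fold q in H.
  replace (P0 ^ 2) with (4 * k ^ 2 * (cos th0 * dx + sin th0 * dy) ^ 2) by (unfold P0; ring).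
  apply Rmult_le_compat_l; [pose proof (pow2_ge_0 k); lra | lra].
Qed.

Lemma gabor_phase_sub_sq_le : (P - P0) ^ 2 <= k ^ 2 * ((2 - 2 * cos D) * q).
Proof.
  pose proof (dot2_sq_le (cos (th0 + D) - cos th0) (sin (th0 + D) - sin th0) dx dy) as H.
  rewrite cos_sin_diff_sq in H; fold q in H.
  replace ((P - P0) ^ 2)
    with (k ^ 2 * ((cos (th0 + D) - cos th0) * dx + (sin (th0 + D) - sin th0) * dy) ^ 2)
    by (unfold P, P0, gabor_phase, k; ring).
  apply Rmult_le_compat_l; [apply pow2_ge_0 | exact H].
Qed.

Lemma norm3_sq_split : q + D ^ 2 = n ^ 2.
Proof. unfold n, q; rewrite norm3_sq; ring. Qed.

Lemma gabor_remainder_le : n <= 1 -> gabor_taylor_const lam sig * n ^ 2 <= 1 ->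
  Rabs (1 - exp (- E) * cos P - (E + P ^ 2 / 2)) <= gabor_taylor_const lam sig ^ 2 * n ^ 3.
Proof.
  intros Hn1 Hcn; change (gabor_taylor_const lam sig) with (b + m + 4 * k ^ 2) in *.
  pose proof gabor_exponent_eq as HE; pose proof gabor_phase_sq_le as HP2; pose proof norm3_sq_split.
  assert (Hb : 0 < b) by (unfold b; apply Rdiv_lt_0_compat; nra).
  assert (Hm : 0 <= m) by (unfold m; apply pow2_ge_0).
  assert (Hn0 : 0 <= n) by apply sqrt_pos.
  assert (Hq : 0 <= q) by (unfold q; nra).
  assert (HD : Rabs D <= 1) by (apply abs_le_of_sq_le; nra).
  pose proof (cos_taylor2 D HD); pose proof (COS_bound D); pose proof (pow2_ge_0 k).
  assert (HE0 : 0 <= E) by (rewrite HE; nra).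
  assert (HEP : E + P ^ 2 <= (b + m + 4 * k ^ 2) * n ^ 2) by (rewrite HE; nra).
  eapply Rle_trans; [apply one_sub_exp_cos_taylor; lra|].
  assert ((E + P ^ 2) ^ 2 <= (b + m + 4 * k ^ 2) ^ 2 * n ^ 4)
    by (replace ((b + m + 4 * k ^ 2) ^ 2 * n ^ 4) with (((b + m + 4 * k ^ 2) * n ^ 2) ^ 2) by ring;
        apply pow_incr; nra).
  assert (n ^ 4 <= n ^ 3)
    by (replace (n ^ 4) with (n ^ 3 * n) by ring; pose proof (pow_le n 3 Hn0); nra).
  eapply Rle_trans; [eassumption|]; apply Rmult_le_compat_l; [apply pow2_ge_0 | assumption].
Qed.

Lemma gabor_exponent_sub_le : n <= 1 -> Rabs (E - E0) <= m * n ^ 3.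
Proof.
  intros Hn1; pose proof norm3_sq_split.
  assert (Hm : 0 <= m) by (unfold m; apply pow2_ge_0).
  assert (Hn0 : 0 <= n) by apply sqrt_pos.
  assert (Hq : 0 <= q) by (unfold q; nra).
  assert (HD : Rabs D <= 1) by (apply abs_le_of_sq_le; nra).
  pose proof (cos_taylor2 D HD).
  rewrite gabor_exponent_eq; unfold E0.
  replace (b * q + m * (2 - 2 * cos D) - (b * q + m * D ^ 2))
    with (- (m * (D ^ 2 - (2 - 2 * cos D)))) by ring.
  rewrite Rabs_Ropp, Rabs_pos_eq by nra.
  assert (D ^ 4 <= n ^ 3).
  { replace (D ^ 4) with ((D ^ 2) ^ 2) by ring.
    apply Rle_trans with ((n ^ 2) ^ 2); [apply pow_incr; nra|].
    replace ((n ^ 2) ^ 2) with (n ^ 3 * n) by ring; pose proof (pow_le n 3 Hn0); nra. }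
  nra.
Qed.

(* [P^2 - P0^2 = (P - P0)^2 + 2 P0 (P - P0)], with [P0 = O(n)] and [P - P0 = O(n^2)]. *)
Lemma gabor_phase_sq_sub_le : n <= 1 -> Rabs (P ^ 2 - P0 ^ 2) <= 5 * k ^ 2 * n ^ 3.
Proof.
  intros Hn1; pose proof norm3_sq_split; pose proof gabor_phase0_sq_le as HP0.
  assert (Hn0 : 0 <= n) by apply sqrt_pos.
  assert (Hq : 0 <= q) by (unfold q; nra).
  assert (HD : Rabs D <= 1) by (apply abs_le_of_sq_le; nra).
  pose proof (cos_taylor2 D HD); pose proof (pow2_ge_0 k).
  assert (HPP : (P - P0) ^ 2 <= k ^ 2 * (D ^ 2 * q))
    by (eapply Rle_trans; [apply gabor_phase_sub_sq_le|]; apply Rmult_le_compat_l; nra).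
  assert (HDq : D ^ 2 * q <= n ^ 4) by (replace (n ^ 4) with ((q + D ^ 2) ^ 2) by nra; nra).
  assert (Hn3 : n ^ 4 <= n ^ 3)
    by (replace (n ^ 4) with (n ^ 3 * n) by ring; pose proof (pow_le n 3 Hn0); nra).
  assert (Hcross : Rabs (2 * P0 * (P - P0)) <= 4 * k ^ 2 * n ^ 3).
  { apply abs_le_of_sq_le; [nra|].
    assert (P0 ^ 2 * (P - P0) ^ 2 <= 4 * k ^ 2 * q * (k ^ 2 * (D ^ 2 * q)))
      by (apply Rmult_le_compat; [apply pow2_ge_0 | apply pow2_ge_0 | exact HP0 | exact HPP]).
    assert (q * (D ^ 2 * q) <= n ^ 2 * n ^ 4) by (apply Rmult_le_compat; nra).
    replace ((2 * P0 * (P - P0)) ^ 2) with (4 * P0 ^ 2 * (P - P0) ^ 2) by ring.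
    replace ((4 * k ^ 2 * n ^ 3) ^ 2) with (16 * (k ^ 2) ^ 2 * (n ^ 2 * n ^ 4)) by ring.
    assert (0 <= (k ^ 2) ^ 2) by nra; nra. }
  replace (P ^ 2 - P0 ^ 2) with ((P - P0) ^ 2 + 2 * P0 * (P - P0)) by ring.
  apply Rabs_le_between in Hcross; apply Rabs_le_between.
  pose proof (pow2_ge_0 (P - P0)); split; nra.
Qed.

Lemma gabor_profile_taylor : n <= 1 -> gabor_taylor_const lam sig * n ^ 2 <= 1 ->
  Rabs (1 - exp (- E) * cos P - (E0 + P0 ^ 2 / 2))
  <= (gabor_taylor_const lam sig ^ 2 + gabor_taylor_const lam sig) * n ^ 3.
Proof.
  intros Hn1 Hcn.
  pose proof (gabor_remainder_le Hn1 Hcn) as H1; pose proof (gabor_exponent_sub_le Hn1) as H2.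
  pose proof (gabor_phase_sq_sub_le Hn1) as H3.
  replace (1 - exp (- E) * cos P - (E0 + P0 ^ 2 / 2))
    with ((1 - exp (- E) * cos P - (E + P ^ 2 / 2)) + (E - E0) + (P ^ 2 - P0 ^ 2) / 2) by field.
  assert (Hn3 : 0 <= n ^ 3) by (apply pow_le, sqrt_pos).
  apply Rabs_le_between in H1; apply Rabs_le_between in H2; apply Rabs_le_between in H3.
  change (gabor_taylor_const lam sig) with (b + m + 4 * k ^ 2) in *.
  assert (0 <= k ^ 2) by apply pow2_ge_0; assert (0 < b) by (unfold b; apply Rdiv_lt_0_compat; nra).
  apply Rabs_le_between; split; nra.
Qed.

Lemma gabor_dist_sq_value_taylor : n <= 1 -> gabor_taylor_const lam sig * n ^ 2 <= 1 ->
  Rabs (gabor_dist_sq_value lam sig dx dy (th0 + D) th0 - quad3 (gmat lam sig th0) dx dy D)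
  <= 2 * PI * sig ^ 2 * (gabor_taylor_const lam sig ^ 2 + gabor_taylor_const lam sig) * n ^ 3.
Proof.
  intros Hn1 Hcn; rewrite quad3_gmat_eq; unfold gabor_dist_sq_value; fold E P.
  rewrite <- Rmult_minus_distr_l, Rabs_mult, Rabs_pos_eq by (pose proof PI_RGT_0; nra).
  rewrite (Rmult_assoc (2 * PI * sig ^ 2)); apply Rmult_le_compat_l; [pose proof PI_RGT_0; nra|].
  apply gabor_profile_taylor; assumption.
Qed.

End GaborTaylor.

Lemma cos_add_2IZR_PI x (z : Z) : cos (x + 2 * IZR z * PI) = cos x.
Proof.
  destruct (Z_le_gt_dec 0 z).
  - rewrite <- (Z2Nat.id z) by assumption; rewrite <- INR_IZR_INZ; apply cos_period.
  - rewrite <- (cos_period (x + 2 * IZR z * PI) (Z.to_nat (- z))); f_equal.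
    rewrite INR_IZR_INZ, Z2Nat.id, opp_IZR by lia; ring.
Qed.

Lemma sin_add_2IZR_PI x (z : Z) : sin (x + 2 * IZR z * PI) = sin x.
Proof.
  destruct (Z_le_gt_dec 0 z).
  - rewrite <- (Z2Nat.id z) by assumption; rewrite <- INR_IZR_INZ; apply sin_period.
  - rewrite <- (sin_period (x + 2 * IZR z * PI) (Z.to_nat (- z))); f_equal.
    rewrite INR_IZR_INZ, Z2Nat.id, opp_IZR by lia; ring.
Qed.

Lemma gabor_dist_sq_value_angle_rep lam sig dx dy th th0 :
  gabor_dist_sq_value lam sig dx dy th th0
  = gabor_dist_sq_value lam sig dx dy (th0 + angle_rep (th - th0)) th0.
Proof.
  replace (th0 + angle_rep (th - th0)) with (th + 2 * IZR (up (- (th - th0 + PI) / (2 * PI))) * PI)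
    by (unfold angle_rep; ring).
  unfold gabor_dist_sq_value, gabor_exponent, gabor_phase.
  rewrite cos_add_2IZR_PI, sin_add_2IZR_PI; reflexivity.
Qed.

Lemma det3_gmat lam sig th0 : 0 < lam -> 0 < sig ->
  det3 (gmat lam sig th0) =
  8 * sig ^ 6 * PI ^ 3 * (1 / (4 * sig ^ 2) + 2 * PI ^ 2 / lam ^ 2)
    * (1 / (4 * sig ^ 2)) * (sig ^ 2 * PI ^ 2 / lam ^ 2).
Proof.
  intros Hlam Hsig; pose proof (sin2_cos2 th0) as U; unfold Rsqr in U.
  transitivity (8 * sig ^ 6 * PI ^ 3 * (1 / (4 * sig ^ 2) + 2 * PI ^ 2 / lam ^ 2)
                  * (1 / (4 * sig ^ 2)) * (sig ^ 2 * PI ^ 2 / lam ^ 2)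
                  * ((sin th0 * sin th0 + cos th0 * cos th0) ^ 2)).
  - unfold det3, gmat; simpl; field; lra.
  - rewrite U; ring.
Qed.

Lemma exists_radius_cubic_le_sq c K eps : 0 <= c -> 0 <= K -> 0 < eps ->
  exists delta, 0 < delta /\ forall n, 0 <= n -> n < delta ->
    n <= 1 /\ c * n ^ 2 <= 1 /\ K * n ^ 3 <= eps * n ^ 2.
Proof.
  intros Hc HK He; exists (Rmin 1 (Rmin (1 / (c + 1)) (eps / (K + 1)))).
  pose proof (Rmin_l 1 (Rmin (1 / (c + 1)) (eps / (K + 1)))).
  pose proof (Rmin_r 1 (Rmin (1 / (c + 1)) (eps / (K + 1)))).
  pose proof (Rmin_l (1 / (c + 1)) (eps / (K + 1))); pose proof (Rmin_r (1 / (c + 1)) (eps / (K + 1))).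
  assert (Hc0 : 0 < 1 / (c + 1)) by (apply Rdiv_lt_0_compat; lra).
  assert (HK0 : 0 < eps / (K + 1)) by (apply Rdiv_lt_0_compat; lra).
  split; [repeat apply Rmin_pos; lra|]; intros n Hn0 Hn.
  assert (Hc1 : (c + 1) * n <= 1)
    by (replace 1 with ((c + 1) * (1 / (c + 1))) at 2 by (field; lra); apply Rmult_le_compat_l; lra).
  assert (HK1 : (K + 1) * n <= eps)
    by (replace eps with ((K + 1) * (eps / (K + 1))) at 1 by (field; lra); apply Rmult_le_compat_l; lra).
  split; [lra | split; nra].
Qed.

Theorem mainTheorem5 (lam sig : R) (Hlam : 0 < lam) (Hsig : 0 < sig) :
  (forall x1 y1 th1 x2 y2 th2 : R, exists l : R,
      gabor_dist_sq lam sig x1 y1 th1 x2 y2 th2 l) /\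
  (forall x0 y0 th0 : R,
     forall eps : R, 0 < eps -> exists delta : R, 0 < delta /\
       forall x y th l : R,
         norm3 (x - x0) (y - y0) (angle_rep (th - th0)) < delta ->
         gabor_dist_sq lam sig x y th x0 y0 th0 l ->
         Rabs (l - quad3 (gmat lam sig th0) (x - x0) (y - y0) (angle_rep (th - th0)))
           <= eps * (norm3 (x - x0) (y - y0) (angle_rep (th - th0))) ^ 2) /\
  (forall th0 : R,
     det3 (gmat lam sig th0) =
     8 * sig ^ 6 * PI ^ 3 * (1 / (4 * sig ^ 2) + 2 * PI ^ 2 / lam ^ 2)
       * (1 / (4 * sig ^ 2)) * (sig ^ 2 * PI ^ 2 / lam ^ 2)).
Proof.
  split; [|split].
  - intros x1 y1 th1 x2 y2 th2; eexists; apply gabor_dist_sq_closed_form; assumption.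
  - intros x0 y0 th0 eps Heps.
    set (c := gabor_taylor_const lam sig).
    pose proof (gabor_taylor_const_nonneg lam sig Hsig) as Hc; fold c in Hc.
    assert (HK : 0 <= 2 * PI * sig ^ 2 * (c ^ 2 + c))
      by (pose proof PI_RGT_0; pose proof (pow2_ge_0 c); assert (0 <= sig ^ 2) by nra;
          apply Rmult_le_pos; [nra | lra]).
    destruct (exists_radius_cubic_le_sq c _ eps Hc HK Heps) as [delta [Hdelta Hsmall]].
    exists delta; split; [exact Hdelta|]; intros x y th l Hn Hl.
    rewrite (integral_R2_unique _ _ _ Hl (gabor_dist_sq_closed_form _ _ _ _ _ _ _ _ Hlam Hsig)).
    rewrite gabor_dist_sq_value_angle_rep.
    destruct (Hsmall _ (sqrt_pos _) Hn) as [Hn1 [Hcn Hcubic]].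
    eapply Rle_trans; [apply gabor_dist_sq_value_taylor; assumption | exact Hcubic].
  - intros th0; apply det3_gmat; assumption.
Qed.
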